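(* Run the Algorithm with an arbitrary admissible weight sequence. Let $\epsilon\in(0,1)$ and let $\mathcal T_1\ge 0$ be an integer such that (on the realization considered) $(1-\epsilon)\lambda_{\min} I\preceq\tilde H_t\preceq(1+\epsilon)\lambda_{\max} I$ for all $t\ge\mathcal T_1$ (e.g. on the event $\mathcal E$ of the positive-definiteness lemma under uniform averaging). Set $$\phi=\frac{4\rho\beta(1-\beta)(1-\epsilon)}{\kappa^2(1+\epsilon)}.$$ Then $f(x_{t+1})-f(x^\star)\le (1-\phi)\bigl(f(x_t)-f(x^\star)\bigr)$ for all $t\ge\mathcal T_1$, and consequently, for all $t\ge \mathcal T_1$, $$\|x_t-x^\star\|\le\Bigl\{\tfrac{2}{\lambda_{\min}}\bigl(f(x_0)-f(x^\star)\bigr)(1-\phi)^{t-\mathcal T_1}\Bigr\}^{1/2},\qquad \|x_t-x^\star\|_{H^\star}\le\Bigl\{2\kappa\bigl(f(x_0)-f(x^\star)\bigr)(1-\phi)^{t-\mathcal T_1}\Bigr\}^{1/2}.$$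
   Context: Setting. $f:\mathbb{R}^d\to\mathbb{R}$ is twice continuously differentiable with Hessian $H(x)=\nabla^2 f(x)$ satisfying $\lambda_{\min} I\preceq H(x)\preceq \lambda_{\max} I$ for all $x\in\mathbb{R}^d$, where $0<\lambda_{\min}\le\lambda_{\max}$; $\kappa=\lambda_{\max}/\lambda_{\min}$; $x^\star$ is the unique minimizer of $f$ and $H^\star=H(x^\star)$. $\|\cdot\|$ is the Euclidean norm for vectors and the spectral norm for matrices; $\|v\|_A=\sqrt{v^\top A v}$ for $A\succeq 0$. Stochastic Hessian oracle: queried at $x$, it returns $\hat H(x)=H(x)+E(x)$, where $E(x)$ is a random symmetric $d\times d$ matrix. Algorithm (stochastic Newton with Hessian averaging). Inputs: deterministic $x_0\in\mathbb{R}^d$, a nondecreasing nonnegative weight sequence $(w_t)_{t\ge -1}$ with $w_{-1}=0$ and $w_t>0$ for $t\ge 0$, constants $\beta\in(0,1/2)$, $\rho\in(0,1)$, and $\tilde H_{-1}=0$. For $t=0,1,2,\dots$: (1) query the oracle at $x_t$ to obtain $\hat H_t=H_t+E_t$, $H_t=H(x_t)$, where conditionally on all randomness generated before iteration $t$, $E_t$ has the law of $E(x_t)$; (2) set $\tilde H_t=\frac{w_{t-1}}{w_t}\tilde H_{t-1}+\bigl(1-\frac{w_{t-1}}{w_t}\bigr)\hat H_t$; (3) if the system $\tilde H_t p=-\nabla f(x_t)$ has no solution, or its solution $p_t$ satisfies $\nabla f(x_t)^\top p_t\ge 0$, set $x_{t+1}=x_t$; (4) otherwise let $\mu_t=\rho^{j_t}$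 where $j_t$ is the smallest nonnegative integer with $f(x_t+\mu_t p_t)\le f(x_t)+\mu_t\beta\nabla f(x_t)^\top p_t$, and set $x_{t+1}=x_t+\mu_t p_t$. *)

From HB Require Import structures.
From mathcomp Require Import all_boot all_order all_algebra.
From mathcomp Require Import all_classical all_reals all_analysis.
Set Implicit Arguments. Unset Strict Implicit. Unset Printing Implicit Defensive.
Import Order.TTheory GRing.Theory Num.Theory.
Import numFieldNormedType.Exports.
Local Open Scope ring_scope.

Section Defs.
Variables (R : realType) (d : nat).
Notation vec := 'cV[R]_d.
Notation mat := 'M[R]_d.

Definition dotv (u v : vec) : R := \sum_(i < d) u i 0 * v i 0.
Definition enorm (v : vec) : R := Num.sqrt (dotv v v).
Definition qform (A : mat) (v : vec) : R := (v^T *m A *m v) 0 0.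
Definition Anorm (A : mat) (v : vec) : R := Num.sqrt (qform A v).
Definition loewner_le (A B : mat) : Prop := forall v : vec, qform A v <= qform B v.

(* weights with the convention w_{-1} = 0, Htilde_{-1} = 0 *)
Definition wprev (w : nat -> R) (t : nat) : R :=
  if t is t'.+1 then w t' else 0.
Definition Hprev (Ht : nat -> mat) (t : nat) : mat :=
  if t is t'.+1 then Ht t' else 0.

(* One realization of the stochastic Newton method with Hessian averaging.
   x : iterates, E : realized oracle noise, Ht : averaged Hessians,
   p : (a) solution of Ht t p = - grad f (x t), whenever one exists. *)
Definition armijo (f : vec -> R) (g : vec -> vec) (beta : R)
    (x p : vec) (mu : R) : Prop :=
  f (x + mu *: p) <= f x + mu * beta * dotv (g x) p.

Definition is_run (f : vec -> R) (g : vec -> vec) (H : vec -> mat)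
    (w : nat -> R) (beta rho : R) (x0 : vec)
    (E : nat -> mat) (Ht : nat -> mat) (p : nat -> vec) (x : nat -> vec) : Prop :=
  [/\ x 0%N = x0,
      forall t, (E t)^T = E t,
      forall t, Ht t = (wprev w t / w t) *: Hprev Ht t
                       + (1 - wprev w t / w t) *: (H (x t) + E t),
      forall t, (exists q : vec, Ht t *m q = - g (x t)) -> Ht t *m p t = - g (x t)
    & forall t,
      if `[< (~ exists q : vec, Ht t *m q = - g (x t)) \/ 0 <= dotv (g (x t)) (p t) >]
      then x t.+1 = x t
      else exists j : nat,
        [/\ armijo f g beta (x t) (p t) (rho ^+ j),
            forall i : nat, (i < j)%N -> ~ armijo f g beta (x t) (p t) (rho ^+ i)
          & x t.+1 = x t + rho ^+ j *: p t]].
End Defs.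

From HB Require Import structures.
From mathcomp Require Import all_boot all_order all_algebra.
From mathcomp Require Import all_classical all_reals all_analysis.
From mathcomp Require Import ring lra.
Import Order.TTheory GRing.Theory Num.Theory.
Import numFieldNormedType.Exports.
Local Open Scope ring_scope.
Set Implicit Arguments. Unset Strict Implicit.

(** Write [s = p^T Ht p = - g.p] and [c = 2 rho (1 - beta) (1 - eps) lmin / lmax].
    Every accepted step decreases [f] by at least [beta c s]: a rejected trial
    step [nu] contradicts the descent lemma
    [f (x + nu p) <= f x - nu s + lmax/2 nu^2 |p|^2] unless [nu > c / rho], so the
    next trial step exceeds [c]; an accepted unit step (possibly shorter than [c]) gains [s - lmax/2 |p|^2]
    by the same lemma.  As [Ht] is symmetric with spectrum in
    [[(1-eps) lmin, (1+eps) lmax]], [|g|^2 = |Ht p|^2 <= (1+eps) lmax s], and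
    strong convexity gives [f x - f xs <= |g|^2 / (2 lmin)]; so the decrease is
    at least [phi (f x - f xs)].  The distance bounds follow from
    [lmin/2 |x - xs|^2 <= f x - f xs].  Symmetry of the Hessian, needed for the
    bound on [|Ht p|^2], follows from its continuity (Schwarz's theorem).  The
    weights enter only through the assumed bounds on [Ht]. *)

Section InnerProduct.
Context {R : realType} {d : nat}.
Implicit Types (u v w : 'cV[R]_d) (A B : 'M[R]_d).

Lemma dotvE u v : dotv u v = (u^T *m v) 0 0.
Proof. by rewrite /dotv mxE; apply: eq_bigr => i _; rewrite mxE. Qed.

Lemma dotvC u v : dotv u v = dotv v u.
Proof. by rewrite /dotv; apply: eq_bigr => i _; rewrite mulrC. Qed.

Lemma dotvDr u v w : dotv u (v + w) = dotv u v + dotv u w.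
Proof. by rewrite !dotvE mulmxDr mxE. Qed.

Lemma dotvDl u v w : dotv (v + w) u = dotv v u + dotv w u.
Proof. by rewrite dotvC dotvDr !(dotvC u). Qed.

Lemma dotvZr (a : R) u v : dotv u (a *: v) = a * dotv u v.
Proof. by rewrite !dotvE -scalemxAr mxE. Qed.

Lemma dotvZl (a : R) u v : dotv (a *: u) v = a * dotv u v.
Proof. by rewrite dotvC dotvZr dotvC. Qed.

Lemma dotvNr u v : dotv u (- v) = - dotv u v.
Proof. by rewrite -scaleN1r dotvZr mulN1r. Qed.

Lemma dotvNl u v : dotv (- u) v = - dotv u v.
Proof. by rewrite dotvC dotvNr dotvC. Qed.

Lemma dotvBl u v w : dotv (v - w) u = dotv v u - dotv w u.
Proof. by rewrite dotvDl dotvNl. Qed.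

Lemma dotv0r u : dotv u 0 = 0.
Proof. by rewrite /dotv big1 // => i _; rewrite mxE mulr0. Qed.

Lemma dotvv_ge0 v : 0 <= dotv v v.
Proof. by rewrite /dotv sumr_ge0 // => i _; rewrite -expr2 sqr_ge0. Qed.

Lemma dotvv_eq0 v : dotv v v = 0 -> v = 0.
Proof.
move=> v0; apply/matrixP => i j; rewrite ord1 mxE.
have sq_ge0 (k : 'I_d) : predT k -> 0 <= v k 0 * v k 0.
  by rewrite -expr2 sqr_ge0.
by have /eqP := psumr_eq0P sq_ge0 v0 isT (i := i); rewrite mulf_eq0 orbb => /eqP.
Qed.

Lemma qformE A v : qform A v = dotv v (A *m v).
Proof. by rewrite /qform dotvE mulmxA. Qed.

Lemma qform_scalar (a : R) v : qform a%:M v = a * dotv v v.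
Proof. by rewrite qformE mul_scalar_mx dotvZr. Qed.

Lemma loewner_le_scalar_l (a : R) A v : loewner_le a%:M A -> a * dotv v v <= qform A v.
Proof. by rewrite -qform_scalar; apply. Qed.

Lemma loewner_le_scalar_r (a : R) A v : loewner_le A a%:M -> qform A v <= a * dotv v v.
Proof. by rewrite -qform_scalar; apply. Qed.

Definition self_adjoint A := forall u v, dotv u (A *m v) = dotv v (A *m u).

Lemma self_adjoint0 : self_adjoint 0.
Proof. by move=> u v; rewrite !mul0mx !dotv0r. Qed.

Lemma self_adjointD A B : self_adjoint A -> self_adjoint B -> self_adjoint (A + B).
Proof. by move=> hA hB u v; rewrite !mulmxDl !dotvDr hA hB. Qed.

Lemma self_adjointZ (a : R) A : self_adjoint A -> self_adjoint (a *: A).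
Proof. by move=> hA u v; rewrite -!scalemxAl !dotvZr hA. Qed.

Lemma trmx_self_adjoint A : A^T = A -> self_adjoint A.
Proof.
move=> hA u v; rewrite !dotvE.
have -> : v^T *m (A *m u) = (u^T *m (A *m v))^T by rewrite !trmx_mul hA trmxK mulmxA.
by rewrite [in RHS]mxE.
Qed.

Lemma quadratic_ge0_discr (a b c : R) :
  0 <= c -> (forall t, 0 <= a + 2 * t * b + t ^+ 2 * c) -> b ^+ 2 <= a * c.
Proof.
move=> c_ge0 hq; have [c_gt0|c_le0] := ltP 0 c.
  have := hq (- b / c).
  have -> : a + 2 * (- b / c) * b + (- b / c) ^+ 2 * c = (a * c - b ^+ 2) / c.
    by field; rewrite gt_eqF.
  by rewrite pmulr_lge0 ?invr_gt0 // subr_ge0.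
have c0 : c = 0 by apply/eqP; rewrite eq_le c_le0 c_ge0.
rewrite c0 mulr0; have [-> | b_neq0] := eqVneq b 0; first by rewrite expr0n.
have := hq (- (a + 1) / (2 * b)); rewrite c0 mulr0 addr0.
have -> : 2 * (- (a + 1) / (2 * b)) * b = - (a + 1) by field.
by lra.
Qed.

(* Cauchy-Schwarz for the semi-inner product [(u, v) |-> u^T A v]. *)
Lemma self_adjoint_sqr_norm_le A v (M : R) : 0 <= M -> self_adjoint A ->
  (forall u, 0 <= qform A u) -> (forall u, qform A u <= M * dotv u u) ->
  dotv (A *m v) (A *m v) <= M * qform A v.
Proof.
move=> M_ge0 sA A_ge0 A_le.
set X := dotv (A *m v) (A *m v); set s := qform A v; set Q := qform A (A *m v).
have X_ge0 : 0 <= X by apply: dotvv_ge0.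
have cs : X ^+ 2 <= s * Q.
  apply: quadratic_ge0_discr; first exact: A_ge0.
  move=> t; have := A_ge0 (v + t *: (A *m v)).
  rewrite !qformE mulmxDr -scalemxAr !dotvDl !dotvDr !dotvZl !dotvZr sA.
  rewrite (sA v) -/X -!qformE -/s -/Q.
  suff -> : s + 2 * t * X + t ^+ 2 * Q = s + t * X + (t * X + t * (t * Q)) by [].
  by ring.
have sQ : s * Q <= s * (M * X) by apply: ler_wpM2l; [exact: A_ge0 | exact: A_le].
have [X_gt0|X_le0] := ltP 0 X; last first.
  by apply: le_trans X_le0 _; rewrite mulr_ge0 // A_ge0.
rewrite -(ler_pM2r X_gt0) -expr2; apply: (le_trans cs); apply: (le_trans sQ).
by rewrite mulrA [s * M]mulrC.
Qed.

Lemma pos_def_solvable A (m : R) : 0 < m -> (forall v, m * dotv v v <= qform A v) ->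
  forall b : 'cV[R]_d, exists q, A *m q = b.
Proof.
move=> m_gt0 A_ge b.
have A_unit : A \in unitmx.
  rewrite -unitmx_tr -row_free_unit; apply: inj_row_free => v vA0.
  have Av0 : A *m v^T = 0 by rewrite -[A]trmxK -trmx_mul vA0 linear0.
  have : m * dotv v^T v^T <= 0 by rewrite -(dotv0r v^T) -Av0 -qformE A_ge.
  rewrite pmulr_rle0 // => vv_le0.
  have vv0 : dotv v^T v^T = 0 by apply/eqP; rewrite eq_le vv_le0 dotvv_ge0.
  by rewrite -(trmxK v) (dotvv_eq0 vv0) linear0.
by exists (invmx A *m b); rewrite mulmxA mulmxV // mul1mx.
Qed.

End InnerProduct.

Section LineDerivatives.
Local Open Scope classical_set_scope.
Context {R : realType} {d : nat}.
Local Notation vec := 'cV[R]_d.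

Lemma is_derive_line (W : normedModType R) (F : vec -> W) (x v : vec) (s : R) :
  differentiable F (x + s *: v) ->
  is_derive s 1 (fun s => F (x + s *: v)) ('d F (x + s *: v) v).
Proof.
move=> dF.
have quotE : (fun h : R => h^-1 *: (((fun s => F (x + s *: v)) \o shift s) (h *: 1)
                - F (x + s *: v))) =
             (fun h : R => h^-1 *: ((F \o shift (x + s *: v)) (h *: v) - F (x + s *: v))).
  apply/funext => h /=; congr (_ *: (F _ - _)).
  by rewrite [h%:A]mulr1 scalerDl addrCA.
split; first by have := @diff_derivable _ _ _ _ _ v dF; rewrite /derivable quotE.
by rewrite /derive quotE -/(derive F (x + s *: v) v) deriveE.
Qed.

Lemma is_derive_dotvl (G : R -> vec) (dG v : vec) (s : R) :
  is_derive s 1 G dG -> is_derive s 1 (fun t => dotv (G t) v) (dotv dG v).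
Proof.
move=> [dv dGE].
have coord i : is_derive s 1 (fun t => G t i 0) (dG i 0).
  split; first exact: ((derivable_mxP G s 1).1 dv i 0).
  by rewrite -dGE derive_mx // mxE.
have -> : (fun t => dotv (G t) v) = \sum_(i < d) (fun t => v i 0 *: G t i 0).
  rewrite fct_sumE; apply/funext => t.
  by apply: eq_bigr => i _; rewrite mulrC.
have -> : dotv dG v = \sum_(i < d) v i 0 *: dG i 0.
  by apply: eq_bigr => i _; rewrite mulrC.
by apply: is_derive_sum => i; apply: is_deriveZ.
Qed.

Lemma is_derive_continuous (F dF : R -> R) (a b : R) :
  (forall s, is_derive s (1 : R) F (dF s)) -> {within `[a, b], continuous F}.
Proof.
by move=> hF; apply: derivable_within_continuous => s _; have [] := hF s.
Qed.

(* Two applications of the mean value theorem to [phi s - psi 0 s - c s^2 / 2]. *)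
Lemma taylor2_le (phi psi psi' : R -> R) (c : R) :
  (forall s, is_derive s (1 : R) phi (psi s)) ->
  (forall s, is_derive s (1 : R) psi (psi' s)) ->
  (forall s, 0 <= s <= 1 -> psi' s <= c) ->
  phi 1 <= phi 0 + psi 0 + c / 2.
Proof.
move=> dphi dpsi psi'_le.
pose Q1 := psi - cst (psi 0) - c \*: (@id R).
pose Q := phi - psi 0 \*: (@id R) - (c / 2) \*: ((@id R) * (@id R)).
have Q1E s : Q1 s = psi s - psi 0 - c * s by rewrite /Q1 !fctE.
have QE s : Q s = phi s - psi 0 * s - c / 2 * (s * s) by rewrite /Q !fctE.
have dQ s : is_derive s (1 : R) Q (Q1 s).
  by apply: is_derive_eq; rewrite Q1E /GRing.scale /= !mulr1; field.
have dQ1 s : is_derive s (1 : R) Q1 (psi' s - c).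
  by apply: is_derive_eq; rewrite /GRing.scale /= mulr1 subr0.
have [xi xi01 Q10] := MVT (@ltr01 R) (fun s _ => dQ s) (is_derive_continuous dQ).
have [xi_gt0 xi_lt1] : 0 < xi /\ xi < 1 by rewrite !(itvP xi01).
have [eta eta0xi Q1xi] := MVT xi_gt0 (fun s _ => dQ1 s) (is_derive_continuous dQ1).
have Q1xi_le0 : Q1 xi <= 0.
  have eta01 : 0 <= eta <= 1.
    by rewrite !ltW ?(itvP eta0xi) // (lt_trans _ xi_lt1) ?(itvP eta0xi).
  have : Q1 xi - Q1 0 <= 0.
    by rewrite Q1xi mulr_le0_ge0 ?subr_le0 ?psi'_le // subr_ge0 ltW.
  by rewrite !Q1E; lra.
have : Q 1 - Q 0 <= 0 by rewrite Q10 mulr_le0_ge0 // subr_ge0 ler01.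
by rewrite !QE; lra.
Qed.

Lemma taylor2_ge (phi psi psi' : R -> R) (c : R) :
  (forall s, is_derive s (1 : R) phi (psi s)) ->
  (forall s, is_derive s (1 : R) psi (psi' s)) ->
  (forall s, 0 <= s <= 1 -> c <= psi' s) ->
  phi 0 + psi 0 + c / 2 <= phi 1.
Proof.
move=> dphi dpsi psi'_ge.
have dNphi s : is_derive s (1 : R) (- phi) ((- psi) s).
  by apply: is_derive_eq; rewrite fctE.
have dNpsi s : is_derive s (1 : R) (- psi) ((- psi') s).
  by apply: is_derive_eq; rewrite fctE.
have psi'N_le s : 0 <= s <= 1 -> (- psi') s <= - c by move=> /psi'_ge; rewrite fctE lerN2.
by have := taylor2_le dNphi dNpsi psi'N_le; rewrite !fctE; lra.
Qed.

End LineDerivatives.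

Section SmoothFunction.
Context {R : realType} {d : nat}.
Local Notation vec := 'cV[R]_d.
Variables (f : vec -> R) (g : vec -> vec) (H : vec -> 'M[R]_d).
Hypotheses (f_diff : forall x, differentiable f x)
  (f_grad : forall x v, 'd f x v = dotv (g x) v)
  (g_diff : forall x, differentiable g x)
  (g_hess : forall x v, 'd g x v = H x *m v).

Lemma is_derive_f_line x v s :
  is_derive s (1 : R) (fun s => f (x + s *: v)) (dotv (g (x + s *: v)) v).
Proof. by rewrite -f_grad; apply: is_derive_line. Qed.

Lemma is_derive_grad_line x w v s :
  is_derive s (1 : R) (fun s => dotv (g (x + s *: w)) v) (dotv (H (x + s *: w) *m w) v).
Proof. by apply: is_derive_dotvl; rewrite -g_hess; apply: is_derive_line. Qed.

Lemma second_difference_mixed x v w h : 0 < h -> exists a b, [/\ 0 < a < h, 0 < b < h &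
  f (x + h *: w + h *: v) - f (x + h *: v) - f (x + h *: w) + f x =
  dotv (H (x + a *: v + b *: w) *m w) v * h * h].
Proof.
move=> h_gt0.
pose psi := (fun s => f (x + h *: w + s *: v)) - (fun s => f (x + s *: v)).
have dpsi s : is_derive s (1 : R) psi
    (dotv (g (x + h *: w + s *: v)) v - dotv (g (x + s *: v)) v).
  by apply: is_deriveB; apply: is_derive_f_line.
have [a a0h psiE] := MVT h_gt0 (fun s _ => dpsi s) (is_derive_continuous dpsi).
pose chi t := dotv (g ((x + a *: v) + t *: w)) v.
have dchi t : is_derive t (1 : R) chi (dotv (H ((x + a *: v) + t *: w) *m w) v).
  exact: is_derive_grad_line.
have [b b0h chiE] := MVT h_gt0 (fun s _ => dchi s) (is_derive_continuous dchi).
exists a, b; split; rewrite ?(itvP a0h) ?(itvP b0h) //.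
rewrite -[h in _ * h * h]subr0 -chiE /chi scale0r addr0 -[x + a *: v + h *: w]addrAC.
move: psiE; rewrite /psi !fctE !scale0r !addr0 subr0 => <-.
by ring.
Qed.

Lemma mx_norm_entry_le (A : 'M[R]_d) i j : `|A i j| <= `|A|.
Proof.
rewrite [leRHS]/Num.Def.normr /= mx_normrE; apply/bigmax_geP; right => /=.
by exists (i, j).
Qed.

Definition l1norm (v : vec) : R := \sum_(i < d) `|v i 0|.

Lemma l1norm_ge0 v : 0 <= l1norm v.
Proof. by apply: sumr_ge0 => i _. Qed.

Lemma dotv_mulmx_le (A : 'M[R]_d) v w : `|dotv (A *m w) v| <= `|A| * l1norm w * l1norm v.
Proof.
rewrite /dotv [in leRHS]/l1norm mulr_sumr; apply: le_trans (ler_norm_sum _ _ _) _.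
apply: ler_sum => i _; rewrite normrM mxE ler_wpM2r //.
rewrite /l1norm mulr_sumr; apply: le_trans (ler_norm_sum _ _ _) _.
by apply: ler_sum => j _; rewrite normrM ler_wpM2r // mx_norm_entry_le.
Qed.

Hypothesis H_cont : continuous H.

Lemma dotv_hessian_near x v w e : 0 < e -> exists2 r, 0 < r &
  forall y, `|x - y| < r -> `|dotv (H x *m w) v - dotv (H y *m w) v| <= e.
Proof.
move=> e_gt0; set C := l1norm w * l1norm v + 1.
have C_gt0 : 0 < C by rewrite ltr_wpDl ?mulr_ge0 ?l1norm_ge0.
have /cvgrPdist_lt /(_ (e / C)) := @H_cont x.
move=> /(_ (divr_gt0 e_gt0 C_gt0)) /nbhs_normP [r r_gt0 Hnear].
exists r => // y xy_lt; rewrite -dotvBl -mulmxBl.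
apply: le_trans (dotv_mulmx_le _ _ _) _; rewrite -mulrA.
apply: le_trans (ler_wpM2r _ (ltW (Hnear y xy_lt))) _.
  by rewrite mulr_ge0 ?l1norm_ge0.
by rewrite mulrAC ler_pdivrMr // ler_wpM2l ?(ltW e_gt0) // lerDl.
Qed.

(* Schwarz's theorem: the mixed second difference quotient tends to both
   [v^T H(x) w] and [w^T H(x) v]. *)
Lemma hessian_self_adjoint x : self_adjoint (H x).
Proof.
suff Hsym v w : dotv (H x *m w) v = dotv (H x *m v) w.
  by move=> u v; rewrite dotvC Hsym dotvC.
apply/eqP; rewrite -subr_eq0 -normr_le0; apply/ler_addgt0Pr => e e_gt0.
have e2_gt0 : 0 < e / 2 by rewrite divr_gt0.
have [r1 r1_gt0 near1] := dotv_hessian_near x v w e2_gt0.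
have [r2 r2_gt0 near2] := dotv_hessian_near x w v e2_gt0.
set r := Num.min r1 r2; have r_gt0 : 0 < r by rewrite lt_min r1_gt0.
have [r_le1 r_le2] : r <= r1 /\ r <= r2 by rewrite !ge_min !lexx orbT.
have [h h_gt0 h_lt] : exists2 h, 0 < h & h * (`|v| + `|w|) < r.
  have N_gt0 : 0 < `|v| + `|w| + 1 by rewrite ltr_wpDl ?addr_ge0.
  exists (r / (`|v| + `|w| + 1)); first by rewrite divr_gt0.
  by rewrite mulrAC ltr_pdivrMr // ltr_pM2l // ltrDl.
have close a b (p q : vec) : 0 < a < h -> 0 < b < h -> `|p| + `|q| = `|v| + `|w| ->
    `|x - (x + a *: p + b *: q)| < r.
  move=> /andP[a_gt0 a_lth] /andP[b_gt0 b_lth] pqE.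
  rewrite -addrA opprD addrA subrr sub0r normrN.
  apply: le_lt_trans (ler_normD _ _) _; rewrite !normrZ !ger0_norm ?ltW //.
  by apply: le_lt_trans h_lt; rewrite -pqE mulrDr lerD // ler_wpM2r // ltW.
have [a [b [a0h b0h Evw]]] := second_difference_mixed x v w h_gt0.
have [a' [b' [a0h' b0h' Ewv]]] := second_difference_mixed x w v h_gt0.
have D12 : dotv (H (x + a *: v + b *: w) *m w) v = dotv (H (x + a' *: w + b' *: v) *m v) w.
  apply: (mulIf (mulf_neq0 (lt0r_neq0 h_gt0) (lt0r_neq0 h_gt0))); rewrite /= !mulrA -Evw -Ewv.
  by rewrite [x + h *: w + h *: v]addrAC; ring.
have d1 := near1 _ (lt_le_trans (close _ _ _ _ a0h b0h erefl) r_le1).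
have d2 := near2 _ (lt_le_trans (close _ _ _ _ a0h' b0h' (addrC _ _)) r_le2).
rewrite distrC D12 in d1.
set D := dotv (H (x + a' *: w + b' *: v) *m v) w in d1 d2.
have -> : dotv (H x *m w) v - dotv (H x *m v) w =
  (D - dotv (H x *m v) w) - (D - dotv (H x *m w) v) by ring.
rewrite add0r (splitr e); apply: le_trans (ler_normB _ _) _.
by rewrite distrC; apply: lerD.
Qed.

Variables (lmin lmax : R).
Hypothesis H_bounds : forall x, loewner_le lmin%:M (H x) /\ loewner_le (H x) lmax%:M.

Lemma f_le_quadratic x v : f (x + v) <= f x + dotv (g x) v + lmax / 2 * dotv v v.
Proof.
have := taylor2_le (c := lmax * dotv v v) (is_derive_f_line x v) (is_derive_grad_line x v v).
rewrite scale1r scale0r addr0 mulrAC; apply => s _.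
by rewrite dotvC -qformE; apply: loewner_le_scalar_r; exact: (H_bounds _).2.
Qed.

Lemma f_ge_quadratic x v : f x + dotv (g x) v + lmin / 2 * dotv v v <= f (x + v).
Proof.
have := taylor2_ge (c := lmin * dotv v v) (is_derive_f_line x v) (is_derive_grad_line x v v).
rewrite scale1r scale0r addr0 mulrAC; apply => s _.
by rewrite dotvC -qformE; apply: loewner_le_scalar_l; exact: (H_bounds _).1.
Qed.

Lemma armijo_fail_lb beta x p nu : 0 < nu -> ~ armijo f g beta x p nu ->
  (1 - beta) * - dotv (g x) p < lmax / 2 * (nu * dotv p p).
Proof.
move=> nu_gt0 /negP; rewrite -ltNge => fail.
have := f_le_quadratic x (nu *: p); rewrite dotvZr dotvZl dotvZr => up.
rewrite -(ltr_pM2l nu_gt0); have := lt_le_trans fail up.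
suff -> : nu * (lmax / 2 * (nu * dotv p p)) = lmax / 2 * (nu * (nu * dotv p p)) by lra.
by ring.
Qed.

Hypotheses (lmin_gt0 : 0 < lmin) (lmin_le_lmax : lmin <= lmax).

(* Polyak-Lojasiewicz: minimize the strong-convexity lower bound over [y]. *)
Lemma f_sub_le_sqr_grad x y : f x - f y <= dotv (g x) (g x) / (2 * lmin).
Proof.
have sq_ge0 := dotvv_ge0 (g x + lmin *: (y - x)).
rewrite !dotvDl !dotvDr !dotvZl !dotvZr (dotvC (y - x) (g x)) in sq_ge0.
have := f_ge_quadratic x (y - x); rewrite (addrC x) subrK.
set G := dotv (g x) (g x) in sq_ge0 *; set A := dotv (g x) (y - x) in sq_ge0 *.
set B := dotv (y - x) (y - x) in sq_ge0 *.
move=> f_ge; rewrite ler_pdivlMr ?mulr_gt0 //.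
have : (f x - f y) * (2 * lmin) <= (- A - lmin / 2 * B) * (2 * lmin).
  by rewrite ler_pM2r ?mulr_gt0 //; lra.
have -> : (- A - lmin / 2 * B) * (2 * lmin) = - (2 * (lmin * A)) - lmin * (lmin * B).
  by field.
by lra.
Qed.

Variable xs : vec.
Hypothesis xs_min : forall y, f xs <= f y.

Lemma grad_min_eq0 v : dotv (g xs) v = 0.
Proof.
have lmax_ge0 : 0 <= lmax by rewrite (le_trans (ltW lmin_gt0)).
have c_ge0 : 0 <= lmax / 2 * dotv v v by rewrite mulr_ge0 ?dotvv_ge0 ?divr_ge0.
have quad t : 0 <= 0 + 2 * t * (dotv (g xs) v / 2) + t ^+ 2 * (lmax / 2 * dotv v v).
  have := f_le_quadratic xs (t *: v); have := xs_min (xs + t *: v).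
  rewrite !dotvZr dotvZl; nra.
have := quadratic_ge0_discr c_ge0 quad; rewrite mul0r => sqr_le0.
have : dotv (g xs) v / 2 = 0 by apply/eqP; rewrite -sqrf_eq0 eq_le sqr_le0 sqr_ge0.
by move/eqP; rewrite mulf_eq0 invr_eq0 pnatr_eq0 orbF => /eqP.
Qed.

Lemma sqr_dist_le_suboptimality x : lmin / 2 * dotv (x - xs) (x - xs) <= f x - f xs.
Proof.
have := f_ge_quadratic xs (x - xs); rewrite (addrC xs) subrK grad_min_eq0 addr0.
by rewrite lerBrDl.
Qed.

End SmoothFunction.

Section StepLength.
Context {R : realFieldType}.
Variables (l M beta rho s P D : R).
Hypotheses (l_gt0 : 0 < l) (beta_ge0 : 0 <= beta) (beta_le1 : beta <= 1)
  (rho_ge0 : 0 <= rho) (rho_le1 : rho <= 1) (P_ge0 : 0 <= P) (lP_le : l * P <= s).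

Let s_ge0 : 0 <= s := le_trans (mulr_ge0 (ltW l_gt0) P_ge0) lP_le.

(* [u (1 - u) >= r (1 - r) >= beta r] for [1/2 <= u <= r := rho (1 - beta)],
   with [u = M / (2 l)] the quadratic term of the descent lemma per unit of [s]. *)
Lemma full_step_decrease : l <= M -> beta * s <= D -> s - M / 2 * P <= D ->
  beta * (2 * rho * (1 - beta) * l / M) * s <= D.
Proof.
move=> l_le_M armijo_ok descent; have M_gt0 : 0 < M by apply: lt_le_trans l_le_M.
set c := 2 * rho * (1 - beta) * l / M.
have [c_le1|c_gt1] := leP c 1.
  by apply: le_trans armijo_ok; rewrite ler_wpM2r // ler_piMr.
set u := M / (2 * l); set r := rho * (1 - beta).
have u_gt0 : 0 < u by rewrite divr_gt0 ?mulr_gt0.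
have cE : c = r / u by rewrite /c /u /r; field; rewrite !gt_eqF.
have u_ge_half : 1 / 2 <= u by rewrite /u ler_pdivlMr ?mulr_gt0 //; lra.
have u_lt_r : u < r by move: c_gt1; rewrite cE ltr_pdivlMr // mul1r.
have beta_r : beta * r <= u * (1 - u).
  have r_le : r <= 1 - beta by rewrite /r ler_piMl // subr_ge0.
  have : 0 <= (r - u) * (r + u - 1) by rewrite mulr_ge0 //; lra.
  have : 0 <= r * (1 - beta - r) by rewrite mulr_ge0 //; lra.
  by nra.
have P_le : M / 2 * P <= u * s.
  have -> : M / 2 * P = u * (l * P) by rewrite /u; field; rewrite gt_eqF.
  by rewrite ler_wpM2l // ltW.
apply: le_trans descent; rewrite cE.
suff : beta * (r / u) * s <= (1 - u) * s by lra.
by rewrite ler_wpM2r // mulrA ler_pdivrMr // [_ * u]mulrC.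
Qed.

Lemma backtrack_step_decrease (nu : R) : 0 < M -> 0 < nu ->
  (1 - beta) * s < M / 2 * (nu * P) -> rho * nu * beta * s <= D ->
  beta * (2 * rho * (1 - beta) * l / M) * s <= D.
Proof.
move=> M_gt0 nu_gt0 fail armijo_ok.
have two_l_ge0 : 0 <= 2 * l by rewrite mulr_ge0 ?ltW.
have key : 2 * l * ((1 - beta) * s) <= M * nu * s.
  apply: le_trans (_ : 2 * l * (M / 2 * (nu * P)) <= _).
    by apply: ler_wpM2l => //; exact: ltW.
  have -> : 2 * l * (M / 2 * (nu * P)) = M * nu * (l * P) by field.
  by rewrite ler_wpM2l // mulr_ge0 ?ltW.
have -> : beta * (2 * rho * (1 - beta) * l / M) * s = rho * beta / M * (2 * l * ((1 - beta) * s)).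
  by field; rewrite gt_eqF.
have rbM_ge0 : 0 <= rho * beta / M by rewrite divr_ge0 ?mulr_ge0 // ltW.
apply: le_trans armijo_ok; apply: le_trans (ler_wpM2l rbM_ge0 key) _.
suff -> : rho * beta / M * (M * nu * s) = rho * nu * beta * s by [].
by field; rewrite gt_eqF.
Qed.

End StepLength.

Lemma rate_le1 (R : realFieldType) (kappa rho beta eps : R) :
  1 <= kappa -> 0 <= rho <= 1 -> 0 <= eps <= 1 ->
  4 * rho * beta * (1 - beta) * (1 - eps) / (kappa ^+ 2 * (1 + eps)) <= 1.
Proof.
move=> kappa_ge1 /andP[rho_ge0 rho_le1] /andP[eps_ge0 eps_le1].
have kappa2_ge1 : 1 <= kappa ^+ 2 by rewrite exprn_ege1.
have den_ge1 : 1 <= kappa ^+ 2 * (1 + eps) by nra.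
rewrite ler_pdivrMr ?mul1r ?(lt_le_trans ltr01) //.
have : 4 * beta * (1 - beta) <= 1 by have := sqr_ge0 (1 - 2 * beta); nra.
have : 0 <= rho * (1 - eps) by rewrite mulr_ge0 // subr_ge0.
have : rho * (1 - eps) <= 1 by rewrite mulr_ile1 // ?subr_ge0 // lerBlDr lerDl.
by nra.
Qed.

Section NewtonRun.
Context {R : realType} {d : nat}.
Local Notation vec := 'cV[R]_d.
Local Notation mat := 'M[R]_d.
Variables (f : vec -> R) (g : vec -> vec) (H : vec -> mat) (lmin lmax : R) (xs : vec).
Hypotheses (f_diff : forall x, differentiable f x)
  (f_grad : forall x v, 'd f x v = dotv (g x) v)
  (g_diff : forall x, differentiable g x)
  (g_hess : forall x v, 'd g x v = H x *m v)
  (H_cont : continuous H)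
  (lmin_gt0 : 0 < lmin) (lmin_le_lmax : lmin <= lmax)
  (H_bounds : forall x, loewner_le lmin%:M (H x) /\ loewner_le (H x) lmax%:M)
  (xs_min : forall y, f xs <= f y).
Variables (x0 : vec) (w : nat -> R) (beta rho : R) (E Ht : nat -> mat) (p x : nat -> vec).
Hypotheses (run : is_run f g H w beta rho x0 E Ht p x)
  (beta_gt0 : 0 < beta) (beta_lt_half : beta < 1 / 2) (rho_gt0 : 0 < rho) (rho_lt1 : rho < 1).

Let lmax_gt0 : 0 < lmax := lt_le_trans lmin_gt0 lmin_le_lmax.

Lemma run_stepP t :
  x t.+1 = x t /\ ((~ exists q, Ht t *m q = - g (x t)) \/ 0 <= dotv (g (x t)) (p t)) \/
  dotv (g (x t)) (p t) < 0 /\ exists j, [/\ armijo f g beta (x t) (p t) (rho ^+ j),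
    forall i, (i < j)%N -> ~ armijo f g beta (x t) (p t) (rho ^+ i)
  & x t.+1 = x t + rho ^+ j *: p t].
Proof.
have [_ _ _ _ /(_ t)] := run; case: asboolP => [skip -> | step jP]; first by left.
by right; split => //; rewrite ltNge; apply/negP => gp_ge0; apply: step; right.
Qed.

Lemma run_f_nonincreasing t : f (x t.+1) <= f (x t).
Proof.
have [[-> _] // | [gp_lt0 [j [armijo_ok _ ->]]]] := run_stepP t.
apply: le_trans armijo_ok _; rewrite gerDl mulr_ge0_le0 ?ltW //.
by rewrite mulr_gt0 ?exprn_gt0.
Qed.

Lemma averaged_hessian_self_adjoint t : self_adjoint (Ht t).
Proof.
have [_ E_sym Ht_def _ _] := run.
have Hhat_sa s : self_adjoint (H (x s) + E s).
  by apply: self_adjointD; [exact: hessian_self_adjoint | exact: trmx_self_adjoint].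
elim: t => [|t IH]; rewrite Ht_def; apply: self_adjointD; apply: self_adjointZ => //.
exact: self_adjoint0.
Qed.

Variables (eps : R) (T1 : nat).
Hypotheses (eps_gt0 : 0 < eps) (eps_lt1 : eps < 1)
  (Ht_bounds : forall t, (T1 <= t)%N ->
     loewner_le ((1 - eps) * lmin)%:M (Ht t) /\ loewner_le (Ht t) ((1 + eps) * lmax)%:M).

Lemma run_newton_direction t : (T1 <= t)%N -> Ht t *m p t = - g (x t).
Proof.
move=> t_ge; have [_ _ _ /(_ t) p_sol _] := run; apply: p_sol.
apply: (@pos_def_solvable _ _ _ ((1 - eps) * lmin)); first by rewrite mulr_gt0 ?subr_gt0.
by move=> v; apply: loewner_le_scalar_l; exact: (Ht_bounds t_ge).1.
Qed.

Lemma run_sqr_grad_le t : (T1 <= t)%N ->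
  dotv (g (x t)) (g (x t)) <= (1 + eps) * lmax * qform (Ht t) (p t).
Proof.
move=> t_ge; have [Ht_lo Ht_up] := Ht_bounds t_ge.
have m_ge0 : 0 <= (1 - eps) * lmin by rewrite mulr_ge0 ?subr_ge0 ?ltW.
rewrite -[g (x t)]opprK -run_newton_direction // dotvNl dotvNr opprK.
apply: self_adjoint_sqr_norm_le.
- by rewrite mulr_ge0 ?addr_ge0 ?ltW.
- exact: averaged_hessian_self_adjoint.
- by move=> u; apply: le_trans (loewner_le_scalar_l u Ht_lo); rewrite mulr_ge0 ?dotvv_ge0.
- by move=> u; apply: loewner_le_scalar_r.
Qed.

Lemma run_decrease t : (T1 <= t)%N ->
  beta * (2 * rho * (1 - beta) * ((1 - eps) * lmin) / lmax) * qform (Ht t) (p t)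
    <= f (x t) - f (x t.+1).
Proof.
move=> t_ge; set s := qform (Ht t) (p t); set P := dotv (p t) (p t).
have gpE : dotv (g (x t)) (p t) = - s.
  by rewrite -[g (x t)]opprK -run_newton_direction // dotvNl dotvC -qformE.
have m_gt0 : 0 < (1 - eps) * lmin by rewrite mulr_gt0 ?subr_gt0.
have lP_le : (1 - eps) * lmin * P <= s by apply: loewner_le_scalar_l; exact: (Ht_bounds t_ge).1.
have [beta_ge0 beta_le1] : 0 <= beta /\ beta <= 1.
  by move: beta_gt0 beta_lt_half => b_gt0 b_lt; split; lra.
have [rho_ge0 rho_le1] : 0 <= rho /\ rho <= 1 by rewrite !ltW.
have [eps_ge0 eps_le1] : 0 <= eps /\ eps <= 1 by rewrite !ltW.
have [[-> [nosol | gp_ge0]] | [_ [[|j] [ok fail ->]]]] := run_stepP t.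
- by case: nosol; exists (p t); apply: run_newton_direction.
- have c_ge0 : 0 <= beta * (2 * rho * (1 - beta) * ((1 - eps) * lmin) / lmax).
    apply: mulr_ge0 => //; apply: divr_ge0; last exact: ltW.
    apply: mulr_ge0; last exact: ltW.
    by apply: mulr_ge0; [apply: mulr_ge0 | rewrite subr_ge0].
  by rewrite subrr mulr_ge0_le0 // -oppr_ge0 -gpE.
- move: ok; rewrite /armijo expr0 scale1r mul1r gpE => ok.
  apply: (full_step_decrease (P := P)) => //.
  + exact: dotvv_ge0.
  + apply: le_trans lmin_le_lmax; apply: ler_piMl; first exact: ltW.
    by rewrite lerBlDr lerDl.
  + by lra.
  + have := f_le_quadratic f_diff f_grad g_diff g_hess H_bounds (x t) (p t).
    by rewrite gpE -/P; lra.
- have nu_gt0 : 0 < rho ^+ j by rewrite exprn_gt0.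
  have := armijo_fail_lb f_diff f_grad g_diff g_hess H_bounds nu_gt0 (fail j (ltnSn j)).
  rewrite gpE opprK => long.
  move: ok; rewrite /armijo gpE exprS => ok.
  by apply: (backtrack_step_decrease (P := P) _ _ _ _ _ nu_gt0 long) => //; lra.
Qed.

Local Notation phi :=
  (4 * rho * beta * (1 - beta) * (1 - eps) / ((lmax / lmin) ^+ 2 * (1 + eps))).

Lemma run_contraction t : (T1 <= t)%N ->
  f (x t.+1) - f xs <= (1 - phi) * (f (x t) - f xs).
Proof.
move=> t_ge; have decrease := run_decrease t_ge; have grad_le := run_sqr_grad_le t_ge.
have PL := f_sub_le_sqr_grad f_diff f_grad g_diff g_hess H_bounds lmin_gt0 (x t) xs.
set s := qform (Ht t) (p t) in decrease grad_le.
have phi_ge0 : 0 <= phi.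
  have [b1 e1] : 0 <= 1 - beta /\ 0 <= 1 - eps.
    by move: beta_lt_half eps_lt1 => b e; split; lra.
  apply: divr_ge0; last by rewrite mulr_ge0 ?sqr_ge0 // addr_ge0 // ltW.
  by rewrite !mulr_ge0 //; exact: ltW.
have : phi * (f (x t) - f xs) <= phi * ((1 + eps) * lmax * s / (2 * lmin)).
  rewrite ler_wpM2l // (le_trans PL) // ler_pM2r ?invr_gt0 ?mulr_gt0 //.
have -> : phi * ((1 + eps) * lmax * s / (2 * lmin)) =
  beta * (2 * rho * (1 - beta) * ((1 - eps) * lmin) / lmax) * s.
  by field; rewrite !gt_eqF ?addr_gt0.
by move: decrease; lra.
Qed.

Lemma run_f_le_init t : f (x t) <= f x0.
Proof.
have [x_0 _ _ _ _] := run.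
by elim: t => [|t IH]; [rewrite x_0 | exact: le_trans (run_f_nonincreasing t) IH].
Qed.

Lemma run_suboptimality_le t : (T1 <= t)%N ->
  f (x t) - f xs <= (1 - phi) ^+ (t - T1) * (f x0 - f xs).
Proof.
move=> /subnKC <-; rewrite addKn; elim: (t - T1)%N => [|k IH].
  by rewrite addn0 expr0 mul1r lerD2r run_f_le_init.
have rate_ge0 : 0 <= 1 - phi.
  rewrite subr_ge0; apply: rate_le1; last 2 first; try by rewrite !ltW.
  by rewrite ler_pdivlMr // mul1r.
rewrite addnS; apply: le_trans (run_contraction (leq_addr _ _)) _.
set r := 1 - phi in IH rate_ge0 *.
by rewrite exprS -mulrA ler_wpM2l.
Qed.

Lemma run_sqr_dist_le t : (T1 <= t)%N ->
  dotv (x t - xs) (x t - xs) <= 2 / lmin * (f x0 - f xs) * (1 - phi) ^+ (t - T1).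
Proof.
move=> t_ge; have lmin2_gt0 : 0 < lmin / 2 by rewrite divr_gt0.
rewrite -(ler_pM2l lmin2_gt0).
have -> : lmin / 2 * (2 / lmin * (f x0 - f xs) * (1 - phi) ^+ (t - T1)) =
  (1 - phi) ^+ (t - T1) * (f x0 - f xs) by field; rewrite gt_eqF.
apply: le_trans (run_suboptimality_le t_ge).
exact: (sqr_dist_le_suboptimality f_diff f_grad g_diff g_hess H_bounds lmin_gt0 lmin_le_lmax xs_min).
Qed.

End NewtonRun.

Theorem mainTheorem3 (R : realType) (d : nat)
  (f : 'cV[R]_d -> R) (g : 'cV[R]_d -> 'cV[R]_d) (H : 'cV[R]_d -> 'M[R]_d)
  (lmin lmax : R) (xs : 'cV[R]_d)
  (Hfd : forall x, differentiable f x)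
  (Hgrad : forall x v, 'd f x v = dotv (g x) v)
  (Hgd : forall x, differentiable g x)
  (Hhess : forall x v, 'd g x v = H x *m v)
  (Hcont : continuous H)
  (Hlmin : 0 < lmin) (Hlle : lmin <= lmax)
  (Hbounds : forall x, loewner_le (lmin%:M) (H x) /\ loewner_le (H x) (lmax%:M))
  (Hmin : forall y, f xs <= f y)
  (x0 : 'cV[R]_d) (w : nat -> R) (beta rho : R)
  (Hwpos : forall t, 0 < w t) (Hwmon : forall t, w t <= w t.+1)
  (Hbeta : 0 < beta /\ beta < 1 / 2) (Hrho : 0 < rho /\ rho < 1)
  (E Ht : nat -> 'M[R]_d) (p x : nat -> 'cV[R]_d)
  (Hrun : is_run f g H w beta rho x0 E Ht p x)
  (eps : R) (T1 : nat) (Heps : 0 < eps /\ eps < 1)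
  (HT1 : forall t, (T1 <= t)%N ->
     loewner_le (((1 - eps) * lmin)%:M) (Ht t) /\
     loewner_le (Ht t) (((1 + eps) * lmax)%:M)) :
  let kappa := lmax / lmin in
  let phi := 4 * rho * beta * (1 - beta) * (1 - eps) / (kappa ^+ 2 * (1 + eps)) in
  (forall t, (T1 <= t)%N -> f (x t.+1) - f xs <= (1 - phi) * (f (x t) - f xs)) /\
  (forall t, (T1 <= t)%N ->
     enorm (x t - xs) <= Num.sqrt (2 / lmin * (f x0 - f xs) * (1 - phi) ^+ (t - T1))) /\
  (forall t, (T1 <= t)%N ->
     Anorm (H xs) (x t - xs) <= Num.sqrt (2 * kappa * (f x0 - f xs) * (1 - phi) ^+ (t - T1))).
Proof.
move=> kappa phi.
case: Hbeta Hrho Heps => [beta_gt0 beta_lt_half] [rho_gt0 rho_lt1] [eps_gt0 eps_lt1].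
have sqr_dist_le := run_sqr_dist_le Hfd Hgrad Hgd Hhess Hcont Hlmin Hlle Hbounds Hmin
  Hrun beta_gt0 beta_lt_half rho_gt0 rho_lt1 eps_gt0 eps_lt1 HT1.
split; first exact: (run_contraction xs Hfd Hgrad Hgd Hhess Hcont Hlmin Hlle Hbounds
  Hrun beta_gt0 beta_lt_half rho_gt0 rho_lt1 eps_gt0 eps_lt1 HT1).
split=> t t_ge; apply: ler_wsqrtr; first exact: sqr_dist_le.
apply: le_trans (loewner_le_scalar_r _ (Hbounds xs).2) _.
have -> : 2 * kappa * (f x0 - f xs) * (1 - phi) ^+ (t - T1) =
  lmax * (2 / lmin * (f x0 - f xs) * (1 - phi) ^+ (t - T1)).
  by rewrite /kappa; field; rewrite gt_eqF.
by rewrite ler_wpM2l ?sqr_dist_le // ltW // (lt_le_trans Hlmin).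
Qed.
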